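(* In the setting described in the context, let $G=\{g_k\}$ be smooth encoders and $\Phi=\{\phi^{(i,k)}\}$ invariant block selectors satisfying the invariance constraint $\iota_i(\phi^{(i,k)}\oslash g_k(\mathbf{x}^k))=\iota_i(\phi^{(i,k')}\oslash g_{k'}(\mathbf{x}^{k'}))$ almost surely for all $i$ and all $k,k'\in V_i$. Then for every $i$ and $k\in V_i$, the map $h_k:=\phi^{(i,k)}\oslash (g_k\circ f_k):\mathbb{R}^N\to\mathbb{R}^{|A_i|}$ does not depend on any coordinate $z_q$ with $q\in[N]\setminus A_i$; i.e. $\phi^{(i,k)}\oslash g_k(\mathbf{x}^k)$ is a function of $\mathbf{z}^k_{A_i}$ only.
   Context: Notation: $[N]=\{1,\dots,N\}$; $\mathbf{z}_A=(\mathbf{z}_j)_{j\in A}$. Latents $\mathbf{z}^1,\dots,\mathbf{z}^K\in\mathbb{R}^N$; $\mathbf{x}^k=f_k(\mathbf{z}^k)\in\mathbb{R}^D$, each $f_k$ a $C^\infty$ diffeomorphism onto its image. Invariance property: for $A\subseteq[N]$ and an equivalence relation $\sim_\iota$ on $\mathbb{R}^{|A|}$, $\iota$ is the quotient projection. Latents $\mathbf{z},\tilde{\mathbf{z}}$ are non-trivially invariant on $A$ under $\iota$ if (i) $\iota(\mathbf{z}_A)=\iota(\tilde{\mathbf{z}}_A)$ and (ii) for any smooth $h_1,h_2:\mathbb{R}^N\to\mathbb{R}^{|A|}$, if some partial derivative $\partial h_1/\partial z_q$ (or $\partial h_2/\partial z_q$) with $q\notin A$ exists and is nonzero at some point, then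 $\iota(h_1(\mathbf{z}))\ne\iota(h_2(\tilde{\mathbf{z}}))$. Standing assumption: finite set $\mathfrak{I}=\{\iota_i\}$ with subsets $A_i$ and known $V_i\subseteq[K]$, $|V_i|\ge 2$, such that the $\mathbf{z}^k$, $k\in V_i$, are pairwise non-trivially invariant on $A_i$ under $\iota_i$. Encoders: smooth $g_k$ on the support of $\mathbf{x}^k$. Selection $a\oslash b=(b_j:a_j=1)$; selectors $\phi^{(i,k)}\in\{0,1\}^N$ with $\|\phi^{(i,k)}\|_0=|A_i|$. *)

From HB Require Import structures.
From mathcomp Require Import all_boot all_order all_algebra.
From mathcomp Require Import all_classical all_reals all_analysis.
Set Implicit Arguments. Unset Strict Implicit. Unset Printing Implicit Defensive.
Import Order.TTheory GRing.Theory Num.Theory.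
Import numFieldNormedType.Exports.
Local Open Scope ring_scope.
Local Open Scope classical_set_scope.

Section Defs.
Variable R : realType.

Definition basis_vec (n : nat) (j : 'I_n) : 'rV[R]_n := delta_mx ord0 j.

Fixpoint Ck (n m : nat) (k : nat) (f : 'rV[R]_n -> 'rV[R]_m) : Prop :=
  match k with
  | 0 => continuous f
  | k'.+1 => continuous f /\
      forall j : 'I_n, (forall x, derivable f x (basis_vec j)) /\
                       Ck k' ('D_(basis_vec j) f)
  end.

Definition smooth (n m : nat) (f : 'rV[R]_n -> 'rV[R]_m) : Prop :=
  forall k, Ck k f.

(** C^infinity diffeomorphism onto its image (= smooth embedding):
    smooth, injective immersion, and homeomorphism onto its image. *)
Definition diffeo_onto_image (n m : nat) (f : 'rV[R]_n -> 'rV[R]_m) : Prop :=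
  [/\ smooth f, injective f,
      (forall z (v : 'rV[R]_n), v != 0 -> 'D_v f z != 0) &
      (forall z (e : R), 0 < e -> exists2 d : R, 0 < d &
          forall z', `|f z' - f z| < d -> `|z' - z| < e)].

(** Selection: the entries of v at the indices in S, in increasing order,
    as a vector of length m (intended m = #|S|).  With S = A this is z_A;
    with S the support of a selector phi this is phi ⊘ v. *)
Definition select (n m : nat) (S : {set 'I_n}) (v : 'rV[R]_n) : 'rV[R]_m :=
  \row_(j < m) nth 0 [seq v ord0 i | i <- enum S] j.

Definition depends_outside (n m : nat) (A : {set 'I_n})
    (h : 'rV[R]_n -> 'rV[R]_m) : Prop :=
  exists q : 'I_n, q \notin A /\
    exists p, derivable h p (basis_vec q) /\ 'D_(basis_vec q) h p != 0.

Definition nontrivially_invariant (d : measure_display) (T : measurableType d)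
    (P : probability T R) (n : nat) (A : {set 'I_n}) (Q : Type)
    (iota : 'rV[R]_#|A| -> Q) (z zt : T -> 'rV[R]_n) : Prop :=
  {ae P, forall w, iota (select #|A| A (z w)) = iota (select #|A| A (zt w))} /\
  forall h1 h2 : 'rV[R]_n -> 'rV[R]_#|A|,
    smooth h1 -> smooth h2 ->
    depends_outside A h1 \/ depends_outside A h2 ->
    ~ {ae P, forall w, iota (h1 (z w)) = iota (h2 (zt w))}.

End Defs.

From HB Require Import structures.
From mathcomp Require Import all_boot all_order all_algebra.
From mathcomp Require Import all_classical all_reals all_analysis.
Import Order.TTheory GRing.Theory Num.Theory.
Import numFieldNormedType.Exports.
Set Implicit Arguments. Unset Strict Implicit. Unset Printing Implicit Defensive.
Local Open Scope ring_scope.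
Local Open Scope classical_set_scope.

(** The map [h_k = phi ⊘ (g_k \o f_k)] is smooth: smooth maps are closed
    under composition (by the chain rule, once continuous partial derivatives
    are shown to give a Fréchet derivative), and selection is linear.  If some
    partial derivative of [h_k] in a direction [q \notin A_i] were nonzero
    somewhere, then for any other view [k' \in V_i] the almost sure invariance
    constraint would contradict clause (ii) of non-trivial invariance of
    [z^k] and [z^k'].  So all these partial derivatives vanish identically,
    and the mean value theorem along coordinate lines shows that [h_k] does
    not see the coordinates outside [A_i]. *)

Section coordinates.
Context {R : realType}.

Lemma derivable_mx_entry (V : normedModType R) m p (G : V -> 'M[R]_(m, p))
    x v i j :
  derivable G x v ->
  derivable (fun t => G t i j) x v /\ 'D_v (fun t => G t i j) x = 'D_v G x i j.
Proof.
move=> dG; split; first by move/derivable_mxP: dG; apply.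
by rewrite (derive_mx dG) mxE.
Qed.

Lemma mx_norm_entry_le n (u : 'rV[R]_n) c : `|u 0 c| <= `|u|.
Proof.
rewrite [leRHS]/Num.Def.normr/= mx_normrE.
by apply: le_trans; last exact: (le_bigmax _ _ (0, c)).
Qed.

Lemma mx_norm_le_entries n (u : 'rV[R]_n) r :
  0 <= r -> (forall c, `|u 0 c| <= r) -> `|u| <= r.
Proof.
move=> r0 ur; rewrite [leLHS]/Num.Def.normr/= mx_normrE (bigmax_le _ r0)//=.
by move=> -[i j] _; rewrite (ord1 i); exact: ur.
Qed.

Lemma derive_along_line n m (G : 'rV[R]_n -> 'rV[R]_m) y v (s : R) :
  derivable G (y + s *: v) v ->
  derivable (fun t : R => G (y + t *: v)) s 1 /\
  'D_1 (fun t : R => G (y + t *: v)) s = 'D_v G (y + s *: v).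
Proof.
have quotE : (fun h : R => h^-1 *: (((fun t : R => G (y + t *: v)) \o shift s)
                (h *: 1) - G (y + s *: v))) =
             (fun h : R => h^-1 *: ((G \o shift (y + s *: v)) (h *: v)
                - G (y + s *: v))).
  apply: funext => h /=.
  by rewrite -[h%:A]/(h * 1) mulr1 scalerDl addrCA.
by rewrite /derivable /derive quotE.
Qed.

End coordinates.

Section smooth_closure.
Context {R : realType}.

Lemma CkW n m k (F : 'rV[R]_n -> 'rV[R]_m) : Ck k.+1 F -> Ck k F.
Proof.
elim: k n m F => [|k IH] n m F /=; first by case.
by move=> [cF dF]; split=> // j; have [? ?] := dF j; split=> //; exact: IH.
Qed.

Lemma Ck_le n m k l (F : 'rV[R]_n -> 'rV[R]_m) : (k <= l)%N -> Ck l F -> Ck k F.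
Proof.
elim: l => [|l IH] kl; first by rewrite leqn0 in kl; rewrite (eqP kl).
rewrite leq_eqVlt ltnS in kl; case/predU1P: kl => [-> //| kl /CkW].
exact: IH.
Qed.

Lemma Ck_continuous n m k (F : 'rV[R]_n -> 'rV[R]_m) : Ck k F -> continuous F.
Proof. by case: k => [|k] //=; case. Qed.

Lemma Ck_cst n m k (c : 'rV[R]_m) : Ck k (fun _ : 'rV[R]_n => c).
Proof.
elim: k n m c => [|k IH] n m c /=; first exact: cst_continuous.
split=> [|j]; first exact: cst_continuous.
split=> [x|]; first exact: derivable_cst.
have -> : 'D_(basis_vec R j) (fun _ : 'rV[R]_n => c) = fun _ => 0.
  by apply/funext => x; exact: (derive_cst c).
exact: IH.
Qed.

Lemma CkD n m k (F G : 'rV[R]_n -> 'rV[R]_m) :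
  Ck k F -> Ck k G -> Ck k (fun x => F x + G x).
Proof.
elim: k F G => [|k IH] F G /=.
  by move=> cF cG x; exact: (continuousD (cF x) (cG x)).
move=> [cF dF] [cG dG]; split=> [x|j]; first exact: (continuousD (cF x) (cG x)).
have [dFj CFj] := dF j; have [dGj CGj] := dG j.
split=> [x|]; first exact: (derivableD (dFj x) (dGj x)).
have -> : 'D_(basis_vec R j) (fun x => F x + G x) =
    fun x => 'D_(basis_vec R j) F x + 'D_(basis_vec R j) G x.
  by apply/funext => x; exact: (deriveD (dFj x) (dGj x)).
exact: IH.
Qed.

Lemma Ck_sum n m k p (F : 'I_p -> 'rV[R]_n -> 'rV[R]_m) :
  (forall l, Ck k (F l)) -> Ck k (fun x => \sum_(l < p) F l x).
Proof.
move=> CkF; rewrite -fct_sumE.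
apply: (big_ind (fun G : 'rV[R]_n -> 'rV[R]_m => Ck k G)) => //.
- exact: (@Ck_cst n m k 0).
- by move=> F1 F2; exact: CkD.
Qed.

Lemma Ck_id n k : Ck k (fun x : 'rV[R]_n => x).
Proof.
case: k => [|k] /=; first by move=> x; exact: cvg_id.
split=> [x|j]; first exact: cvg_id.
split=> [x|]; first exact: derivable_id.
have -> : 'D_(basis_vec R j) (fun x : 'rV[R]_n => x) = fun _ => basis_vec R j.
  by apply/funext => x; exact: derive_id.
exact: Ck_cst.
Qed.

Lemma continuous_entry n p (a : 'rV[R]_n -> 'rV[R]_p) c :
  continuous a -> continuous (fun x => a x 0 c).
Proof.
move=> ca x.
exact: (continuous_comp (ca x) (@coord_continuous R 1 p 0 c (a x))).
Qed.

Lemma deriveZ_entry n m p (a : 'rV[R]_n -> 'rV[R]_p) (b : 'rV[R]_n -> 'rV[R]_m)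
    c x v :
  derivable a x v -> derivable b x v ->
  derivable (fun t => a t 0 c *: b t) x v /\
  'D_v (fun t => a t 0 c *: b t) x = 'D_v a x 0 c *: b x + a x 0 c *: 'D_v b x.
Proof.
move=> da db.
have entry i j : derivable (fun t => (a t 0 c *: b t) i j) x v /\
    'D_v (fun t => (a t 0 c *: b t) i j) x =
    ('D_v a x 0 c *: b x + a x 0 c *: 'D_v b x) i j.
  have -> : (fun t => (a t 0 c *: b t) i j) =
      (fun t => a t 0 c) * (fun t => b t i j).
    by apply/funext => t; rewrite mxE.
  have [da1 Da1] := derivable_mx_entry 0 c da.
  have [db1 Db1] := derivable_mx_entry i j db.
  split; first exact: derivableM.
  by rewrite deriveM // Da1 Db1 !mxE /= addrC; congr (_ + _); exact: mulrC.
have dab : derivable (fun t => a t 0 c *: b t) x v.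
  by apply/derivable_mxP => i j; case: (entry i j).
split=> //; rewrite (derive_mx dab); apply/matrixP => i j.
by rewrite mxE; case: (entry i j).
Qed.

Lemma CkZ_entry n m p k (a : 'rV[R]_n -> 'rV[R]_p) (b : 'rV[R]_n -> 'rV[R]_m) c :
  Ck k a -> Ck k b -> Ck k (fun t => a t 0 c *: b t).
Proof.
have cont (a' : 'rV[R]_n -> 'rV[R]_p) (b' : 'rV[R]_n -> 'rV[R]_m) :
    continuous a' -> continuous b' -> continuous (fun t => a' t 0 c *: b' t).
  by move=> ca cb x; apply: continuousZ; [exact: continuous_entry | exact: cb].
elim: k a b => [|k IH] a b; first exact: cont.
move=> Ca Cb; have Ca' := CkW Ca; have Cb' := CkW Cb.
move: Ca Cb => [ca da] [cb db]; split=> [|j]; first exact: cont.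
have [daj Caj] := da j; have [dbj Cbj] := db j.
split=> [x|]; first by case: (deriveZ_entry c (daj x) (dbj x)).
have -> : 'D_(basis_vec R j) (fun t => a t 0 c *: b t) = fun x =>
    'D_(basis_vec R j) a x 0 c *: b x + a x 0 c *: 'D_(basis_vec R j) b x.
  by apply/funext => x; case: (deriveZ_entry c (daj x) (dbj x)).
by apply: CkD; apply: IH.
Qed.

Lemma Ck_mulmx n m k (J : 'M[R]_(n, m)) : Ck k (fun h : 'rV[R]_n => h *m J).
Proof.
have -> : (fun h : 'rV[R]_n => h *m J) =
    fun h => \sum_(i < n) h 0 i *: (fun _ : 'rV[R]_n => row i J) h.
  by apply: funext => h; rewrite mulmx_sum_row.
by apply: Ck_sum => i; apply: CkZ_entry; [exact: Ck_id | exact: Ck_cst].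
Qed.

End smooth_closure.
Section continuous_partials.
Context {R : realType}.

Lemma mean_value_deviation_le (psi : R -> R) (a e t : R) :
  (forall s, derivable psi s 1) ->
  (forall s, `|s| <= `|t| -> `|'D_1 psi s - a| <= e) ->
  `|psi t - psi 0 - t * a| <= e * `|t|.
Proof.
move=> dpsi psi'_near.
have cpsi : continuous psi.
  by move=> s; apply/differentiable_continuous/derivable1_diffP.
have psi' s : is_derive s (1 : R) psi ('D_1 psi s) by exact: derivableP.
have [t0|t0] := leP 0 t.
  have [c /andP[c0 ct] ->] := MVT_segment t0 (fun s _ => psi' s)
    (continuous_subspaceT cpsi).
  rewrite subr0 [t * a]mulrC -mulrBl normrM ler_wpM2r //.
  by apply: psi'_near; rewrite !ger0_norm // (le_trans c0).
have [c /andP[tc c0] psiE] := MVT_segment (ltW t0) (fun s _ => psi' s)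
  (continuous_subspaceT cpsi).
have -> : psi t - psi 0 = 'D_1 psi c * t by rewrite -opprB psiE sub0r mulrN opprK.
rewrite [t * a]mulrC -mulrBl normrM ler_wpM2r //.
by apply: psi'_near; rewrite !ler0_norm ?lerN2 // ltW.
Qed.

Lemma partial_increment_deviation_le n m (F : 'rV[R]_n -> 'rV[R]_m) (q : 'I_n)
    y (t : R) x (e : R) :
  (forall p, derivable F p (basis_vec R q)) ->
  (forall s : R, `|s| <= `|t| ->
     `|'D_(basis_vec R q) F (y + s *: basis_vec R q)
         - 'D_(basis_vec R q) F x| <= e) ->
  `|F (y + t *: basis_vec R q) - F y - t *: 'D_(basis_vec R q) F x| <= e * `|t|.
Proof.
set v := basis_vec R q => dF F'_near.
have e0 : 0 <= e by apply: le_trans (F'_near 0 _); rewrite ?normr0.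
apply: mx_norm_le_entries; first by rewrite mulr_ge0.
move=> c; pose psi s := F (y + s *: v) 0 c.
have dline s := derive_along_line (dF (y + s *: v)).
have := @mean_value_deviation_le psi ('D_v F x 0 c) e t.
have -> : psi 0 = F y 0 c by rewrite /psi scale0r addr0.
rewrite !mxE; apply=> [s|s st].
  by have [ds _] := dline s; have [] := derivable_mx_entry 0 c ds.
have [ds Ds] := dline s; have [_ ->] := derivable_mx_entry 0 c ds.
rewrite Ds; apply: le_trans (F'_near s st).
by apply: le_trans (mx_norm_entry_le _ c); rewrite !mxE.
Qed.

(* The increment [F (x + h) - F x] is telescoped over the prefixes of [h],
   one coordinate at a time. *)
Definition row_prefix n (l : nat) (h : 'rV[R]_n) : 'rV[R]_n :=
  \row_j (if (j < l)%N then h 0 j else 0).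

Lemma row_prefix0 n (h : 'rV[R]_n) : row_prefix 0 h = 0.
Proof. by apply/rowP => j; rewrite !mxE. Qed.

Lemma row_prefix_full n (h : 'rV[R]_n) : row_prefix n h = h.
Proof. by apply/rowP => j; rewrite !mxE ltn_ord. Qed.

Lemma row_prefix_addZ n l (ln : (l < n)%N) (h : 'rV[R]_n) (s : R) j :
  (row_prefix l h + s *: basis_vec R (Ordinal ln)) 0 j =
  if (j < l)%N then h 0 j else if nat_of_ord j == l then s else 0.
Proof.
rewrite !mxE eqxx /= -[j == _]/(nat_of_ord j == l).
by case: ltngtP => _; rewrite ?mulr0 ?addr0 ?mulr1 ?add0r.
Qed.

Lemma row_prefixS n l (ln : (l < n)%N) (h : 'rV[R]_n) :
  row_prefix l.+1 h = row_prefix l h + h 0 (Ordinal ln) *: basis_vec R (Ordinal ln).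
Proof.
apply/rowP => j; rewrite row_prefix_addZ mxE ltnS leq_eqVlt orbC.
by case: ltngtP => // jl; congr (h 0 _); exact: val_inj.
Qed.

Lemma row_prefix_deviation_le n m (F : 'rV[R]_n -> 'rV[R]_m) x
    (J : 'M[R]_(n, m)) (h : 'rV[R]_n) (delta e : R) :
  (forall j p, derivable F p (basis_vec R j)) ->
  (forall j, row j J = 'D_(basis_vec R j) F x) ->
  (forall y, `|y - x| < delta -> forall j,
      `|'D_(basis_vec R j) F y - 'D_(basis_vec R j) F x| <= e) ->
  `|h| < delta ->
  forall l, (l <= n)%N ->
    `|F (x + row_prefix l h) - F x - row_prefix l h *m J| <= l%:R * e * `|h|.
Proof.
move=> dF rowJ F'_near hdelta; elim=> [_|l IH ln].
  by rewrite row_prefix0 addr0 subrr mul0mx subr0 normr0 !mul0r.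
pose q := Ordinal ln; pose y := x + row_prefix l h.
have -> : x + row_prefix l.+1 h = y + h 0 q *: basis_vec R q.
  by rewrite (row_prefixS ln) addrA.
have -> : row_prefix l.+1 h *m J =
    row_prefix l h *m J + h 0 q *: 'D_(basis_vec R q) F x.
  by rewrite (row_prefixS ln) mulmxDl -scalemxAl -rowE rowJ.
have telescope (a b c d w : 'rV[R]_m) :
    a - b - (c + d) = (a - w - d) + (w - b - c).
  rewrite opprD !addrA [a - w - d + w]addrAC subrK.
  by rewrite [a - d - b]addrAC [a - b - d - c]addrAC.
rewrite (telescope _ _ _ _ (F y)).
apply: le_trans (ler_normD _ _) _.
rewrite mulrSr mulrDl mul1r mulrDl addrC; apply: lerD; first exact: IH (ltnW ln).
have e0 : 0 <= e.
  by apply: le_trans (F'_near x _ q); rewrite ?subrr ?normr0 ?(le_lt_trans _ hdelta).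
apply: le_trans (partial_increment_deviation_le (e := e) (dF q) _) _; last first.
  by rewrite ler_wpM2l ?mx_norm_entry_le.
move=> s st; apply: F'_near.
rewrite /y addrAC [x + _]addrC addrK; apply: le_lt_trans hdelta.
apply: mx_norm_le_entries => // j; rewrite row_prefix_addZ.
case: ifP => _; first exact: mx_norm_entry_le.
by case: ifP => _; rewrite ?normr0 // (le_trans st) ?mx_norm_entry_le.
Qed.

Lemma differentiable_linear_approx (V W : normedModType R) (F : V -> W)
    (dF : {linear V -> W}) x :
  continuous dF -> F \o shift x = cst (F x) + dF +o_0 id -> differentiable F x.
Proof.
move=> dFc FE; apply/diff_locallyP.
by rewrite (diff_unique dFc FE); split.
Qed.

Lemma continuous_partials_differentiable n m (F : 'rV[R]_n -> 'rV[R]_m) :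
  (forall j p, derivable F p (basis_vec R j)) ->
  (forall j, continuous ('D_(basis_vec R j) F)) ->
  forall x, differentiable F x.
Proof.
move=> dF cF' x.
pose J := \matrix_(j < n, c < m) 'D_(basis_vec R j) F x 0 c.
have rowJ j : row j J = 'D_(basis_vec R j) F x by apply/rowP => c; rewrite !mxE.
apply: (@differentiable_linear_approx _ _ F (mulmxr J) x).
  exact: (Ck_continuous (@Ck_mulmx R n m 0 J)).
apply/eqaddoP => e e0.
(* Each of the [n] coordinate steps of the telescoping costs [e' * `|h|]. *)
pose e' := e / n.+1%:R.
have e'0 : 0 < e' by rewrite divr_gt0 // ltr0n.
have : \forall y \near x, forall j,
    `|'D_(basis_vec R j) F x - 'D_(basis_vec R j) F y| <= e'.
  apply: (@filter_forall _ _ (fun j y =>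
    `|'D_(basis_vec R j) F x - 'D_(basis_vec R j) F y| <= e') (nbhs x) _) => j.
  by move: (cF' j x) => /cvgrPdist_le /(_ e' e'0).
move/nbhs_ballP => [delta delta0 F'_near].
apply/nbhs_ballP; exists delta => // h hb.
have hdelta : `|h| < delta by move: hb; rewrite -ball_normE /ball_ /= sub0r normrN.
have F'_ball y : `|y - x| < delta -> forall j,
    `|'D_(basis_vec R j) F y - 'D_(basis_vec R j) F x| <= e'.
  by move=> yx j; rewrite distrC; apply: F'_near; rewrite -ball_normE /ball_ /= distrC.
have := row_prefix_deviation_le dF rowJ F'_ball hdelta (leqnn n).
rewrite row_prefix_full => dev.
have -> : (F \o shift x - (cst (F x) + mulmxr J)) h = F (x + h) - F x - h *m J.
  by rewrite -[LHS]/(F (h + x) - (F x + h *m J)) [h + x]addrC opprD addrA.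
apply: le_trans dev _.
rewrite ler_wpM2r // /e' mulrA ler_pdivrMr ?ltr0n // mulrC.
by apply: ler_wpM2l; [exact: ltW | rewrite ler_nat].
Qed.

Lemma Ck1_differentiable n m (F : 'rV[R]_n -> 'rV[R]_m) :
  Ck 1 F -> forall x, differentiable F x.
Proof.
move=> [_ CF]; apply: continuous_partials_differentiable => j; case: (CF j) => //.
Qed.

End continuous_partials.

Section composition.
Context {R : realType}.

Lemma derive_comp_partials n m p (F : 'rV[R]_n -> 'rV[R]_m)
    (G : 'rV[R]_m -> 'rV[R]_p) x v :
  Ck 1 F -> Ck 1 G ->
  derivable (fun x => G (F x)) x v /\
  'D_v (fun x => G (F x)) x =
    \sum_(l < m) 'D_v F x 0 l *: 'D_(basis_vec R l) G (F x).
Proof.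
move=> CF CG.
have dF := Ck1_differentiable CF x; have dG := Ck1_differentiable CG (F x).
have dGF := differentiable_comp dF dG.
split; first exact: (diff_derivable (v := v) dGF).
rewrite (deriveE v dGF) (diff_comp dF dG) /= -(deriveE v dF).
rewrite {1}(row_sum_delta ('D_v F x)) linear_sum; apply: eq_bigr => l _.
by rewrite linearZ /= -(deriveE _ dG).
Qed.

Lemma Ck_comp n m p k (F : 'rV[R]_n -> 'rV[R]_m) (G : 'rV[R]_m -> 'rV[R]_p) :
  Ck k F -> Ck k G -> Ck k (fun x => G (F x)).
Proof.
elim: k F G => [|k IH] F G.
  by move=> cF cG x; apply: continuous_comp; [exact: cF | exact: cG].
move=> CF CG; have CF1 := Ck_le (isT : (1 <= k.+1)%N) CF.
have CG1 := Ck_le (isT : (1 <= k.+1)%N) CG.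
have CFk := CkW CF; move: CF CG => [cF dF] [cG dG].
split=> [x|j]; first by apply: continuous_comp; [exact: cF | exact: cG].
split=> [x|]; first by case: (derive_comp_partials x (basis_vec R j) CF1 CG1).
have -> : 'D_(basis_vec R j) (fun x => G (F x)) = fun x =>
    \sum_(l < m) 'D_(basis_vec R j) F x 0 l *:
                 (fun y => 'D_(basis_vec R l) G (F y)) x.
  by apply: funext => x; case: (derive_comp_partials x (basis_vec R j) CF1 CG1).
apply: (Ck_sum (F := fun l x => 'D_(basis_vec R j) F x 0 l *:
                                 'D_(basis_vec R l) G (F x))) => l.
apply: (CkZ_entry (a := 'D_(basis_vec R j) F)
                  (b := fun x => 'D_(basis_vec R l) G (F x))); first by case: (dF j).
by apply: (IH F ('D_(basis_vec R l) G)) => //; case: (dG l).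
Qed.

Lemma smooth_comp n m p (F : 'rV[R]_n -> 'rV[R]_m) (G : 'rV[R]_m -> 'rV[R]_p) :
  smooth F -> smooth G -> smooth (fun x => G (F x)).
Proof. by move=> sF sG k; exact: Ck_comp. Qed.

Lemma select_mulmx n m (S : {set 'I_n}) :
  exists J : 'M[R]_(n, m), forall v, select m S v = v *m J.
Proof.
exists (\matrix_(i, j) (((j : nat) < size (enum S))%N && (nth i (enum S) j == i))%:R).
move=> v; apply/rowP => j; rewrite !mxE.
case: (ltnP j (size (enum S))) => js; last first.
  by rewrite nth_default ?size_map // big1 // => i _; rewrite !mxE ltnNge js mulr0.
case eS : (enum S) js => [//|a s] js.
rewrite (nth_map a) // (bigD1 (nth a (a :: s) j)) //= !mxE js /=.
rewrite [nth (nth _ _ _) _ _](set_nth_default a) // eqxx mulr1 big1 ?addr0 //.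
move=> i ne.
by rewrite !mxE js /= (set_nth_default a) // eq_sym (negbTE ne) mulr0.
Qed.

Lemma smooth_select n m p (S : {set 'I_m}) (F : 'rV[R]_n -> 'rV[R]_m) :
  smooth F -> smooth (fun x => select p S (F x)).
Proof.
have [J selJ] := select_mulmx p S.
move=> sF; under eq_fun do rewrite selJ.
by apply: (smooth_comp (G := fun w => w *m J) sF) => k; exact: Ck_mulmx.
Qed.

End composition.

Section independence.
Context {R : realType}.
Variables (n m : nat) (H : 'rV[R]_n -> 'rV[R]_m) (A : {set 'I_n}).
Hypothesis partial_outside0 : forall q, q \notin A -> forall p,
  derivable H p (basis_vec R q) /\ 'D_(basis_vec R q) H p = 0.

Lemma partial_outside0_line q (qA : q \notin A) y (t : R) :
  H (y + t *: basis_vec R q) = H y.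
Proof.
apply/rowP => c; pose psi s := H (y + s *: basis_vec R q) 0 c.
have -> : H y = H (y + 0 *: basis_vec R q) by rewrite scale0r addr0.
apply: (is_derive_0_is_cst (f := psi)) => s.
have [dH H'0] := partial_outside0 qA (y + s *: basis_vec R q).
have [ds Ds] := derive_along_line dH.
have [dpsi Dpsi] := derivable_mx_entry 0 c ds.
by have := derivableP dpsi; rewrite Dpsi Ds H'0 mxE.
Qed.

Lemma partial_outside0_sum (s : seq 'I_n) (c : 'I_n -> R) y :
  all [predC A] s -> H (y + \sum_(q <- s) c q *: basis_vec R q) = H y.
Proof.
elim: s y => [|q s IH] y /=; first by rewrite big_nil addr0.
case/andP=> qA sA; rewrite big_cons addrCA addrC.
by rewrite partial_outside0_line // IH.
Qed.

Lemma partial_outside0_agree (u u' : 'rV[R]_n) :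
  (forall j, j \in A -> u 0 j = u' 0 j) -> H u = H u'.
Proof.
move=> uA.
have -> : u' = u + \sum_(q <- [seq q <- index_enum 'I_n | q \notin A])
                     (u' 0 q - u 0 q) *: basis_vec R q.
  apply/eqP; rewrite addrC -subr_eq; apply/eqP.
  rewrite big_filter [LHS]row_sum_delta (bigID (mem A)) /= big1 ?add0r.
    by apply: eq_bigr => j _; rewrite !mxE.
  by move=> j jA; rewrite !mxE uA // addrN scale0r.
by rewrite partial_outside0_sum // filter_all.
Qed.

End independence.

Lemma independent_outside {R : realType} n m (H : 'rV[R]_n -> 'rV[R]_m)
    (A : {set 'I_n}) :
  Ck 1 H -> ~ depends_outside A H ->
  forall u u' : 'rV[R]_n, (forall j, j \in A -> u 0 j = u' 0 j) -> H u = H u'.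
Proof.
move=> [_ dH] indep; apply: partial_outside0_agree => q qA p.
have dHq : derivable H p (basis_vec R q) by case: (dH q).
split=> //; apply/eqP; apply: contraT => H'q; case: indep.
by exists q; split=> //; exists p.
Qed.

Lemma card_ge2_other (T : finType) (S : {set T}) x :
  (2 <= #|S|)%N -> x \in S -> exists2 y, y \in S & x != y.
Proof.
move=> S2 xS; have : (0 < #|S :\ x|)%N by move: S2; rewrite (cardsD1 x) xS.
by case/card_gt0P => y; rewrite !inE eq_sym => /andP[xy yS]; exists y.
Qed.

Theorem mainTheorem3
  (R : realType) (d : measure_display) (T : measurableType d)
  (P : probability T R)
  (N D K M : nat)
  (z : 'I_K -> T -> 'rV[R]_N)
  (f : 'I_K -> 'rV[R]_N -> 'rV[R]_D)
  (A : 'I_M -> {set 'I_N})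
  (V : 'I_M -> {set 'I_K})
  (Q : 'I_M -> Type)
  (iota : forall i : 'I_M, 'rV[R]_#|A i| -> Q i)
  (g : 'I_K -> 'rV[R]_D -> 'rV[R]_N)
  (phi : 'I_M -> 'I_K -> {set 'I_N}) :
  (forall k, diffeo_onto_image (f k)) ->
  (forall i, 2 <= #|V i|)%N ->
  (forall i k k', k \in V i -> k' \in V i -> k != k' ->
     nontrivially_invariant P (iota i) (z k) (z k')) ->
  (forall k, smooth (g k)) ->
  (forall i k, k \in V i -> #|phi i k| = #|A i|) ->
  (forall i k k', k \in V i -> k' \in V i ->
     {ae P, forall w,
        iota i (select #|A i| (phi i k) (g k (f k (z k w)))) =
        iota i (select #|A i| (phi i k') (g k' (f k' (z k' w))))}) ->
  forall i k, k \in V i ->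
    forall u u' : 'rV[R]_N, (forall j, j \in A i -> u ord0 j = u' ord0 j) ->
      select #|A i| (phi i k) (g k (f k u)) =
      select #|A i| (phi i k) (g k (f k u')).
Proof.
move=> f_diffeo V2 z_invariant g_smooth _ constraint i k kV u u' uuA.
have [k' k'V kk'] := card_ge2_other (V2 i) kV.
pose h l v := select #|A i| (phi i l) (g l (f l v)).
have h_smooth l : smooth (h l).
  by apply/smooth_select/smooth_comp; [case: (f_diffeo l) | exact: g_smooth].
have [_ nontrivial] := z_invariant i k k' kV k'V kk'.
apply: (independent_outside (h_smooth k 1%N) _ uuA) => dep.
exact: nontrivial (h k) (h k') (h_smooth k) (h_smooth k') (or_introl dep)
  (constraint i k k' kV k'V).
Qed.
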